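(* Let $L_2$ be the free Lie algebra generated by $x,y$ over a field $K$ of characteristic zero, and let $\xi$ be an automorphism of $L_2$ which maps the algebra $L_2^{S_2}$ of symmetric polynomials into itself (i.e. $\xi\in\mathrm{Aut}(L_2^{S_2})$). Then there exist $a,b\in K$ with $c:=a^2-b^2\neq 0$ such that \[\xi(x)=ax+by,\quad \xi(y)=bx+ay,\] \[\xi^{-1}(x)=c^{-1}ax-c^{-1}by,\quad \xi^{-1}(y)=-c^{-1}bx+c^{-1}ay.\]
   Context: The symmetric group $S_2$ acts on $L_2$ by swapping $x$ and $y$; an element $p(x,y)$ is symmetric if $p(x,y)=p(y,x)$, and $L_2^{S_2}$ is the algebra of symmetric elements. *)

From HB Require Import structures.
From mathcomp Require Import all_boot all_order all_algebra.
Set Implicit Arguments. Unset Strict Implicit. Unset Printing Implicit Defensive.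
Import Order.TTheory GRing.Theory Num.Theory.
Local Open Scope ring_scope.

(* The ambient free associative algebra K<<x,y>> of (noncommutative) formal
   series in two variables: a series is a map from words over {x,y} to K,
   where the letter [false] stands for x and [true] for y. *)
Definition ncser (K : fieldType) := seq bool -> K.

Section NC.
Variable K : fieldType.

Definition ncadd (f g : ncser K) : ncser K := fun w => f w + g w.
Definition ncscale (a : K) (f : ncser K) : ncser K := fun w => a * f w.
Definition ncmul (f g : ncser K) : ncser K :=
  fun w => \sum_(i < (size w).+1) f (take i w) * g (drop i w).
Definition nclie (f g : ncser K) : ncser K :=
  fun w => ncmul f g w - ncmul g f w.

Definition ncx : ncser K := fun w => if w == [:: false] then 1 else 0.
Definition ncy : ncser K := fun w => if w == [:: true] then 1 else 0.

(* L_2: the Lie subalgebra of K<x,y> generated by x and y, i.e. the free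
   Lie algebra on x, y. *)
Inductive in_L2 : ncser K -> Prop :=
  | L2_x : in_L2 ncx
  | L2_y : in_L2 ncy
  | L2_add : forall f g, in_L2 f -> in_L2 g -> in_L2 (ncadd f g)
  | L2_scale : forall a f, in_L2 f -> in_L2 (ncscale a f)
  | L2_lie : forall f g, in_L2 f -> in_L2 g -> in_L2 (nclie f g).

Definition ncswap (f : ncser K) : ncser K := fun w => f (map negb w).

Definition symmetric_L2 (f : ncser K) : Prop := in_L2 f /\ ncswap f = f.

(* Lie algebra endomorphism of L_2 (represented on the ambient type, only
   its values on L_2 matter). *)
Definition lie_endo (xi : ncser K -> ncser K) : Prop :=
  [/\ forall f, in_L2 f -> in_L2 (xi f),
      forall a f g, in_L2 f -> in_L2 g ->
        xi (ncadd (ncscale a f) g) = ncadd (ncscale a (xi f)) (xi g)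
    & forall f g, in_L2 f -> in_L2 g -> xi (nclie f g) = nclie (xi f) (xi g)].

Definition lie_aut_with_inv (xi xiinv : ncser K -> ncser K) : Prop :=
  [/\ lie_endo xi,
      forall f, in_L2 f -> in_L2 (xiinv f),
      forall f, in_L2 f -> xiinv (xi f) = f
    & forall f, in_L2 f -> xi (xiinv f) = f].

End NC.

From HB Require Import structures.
From mathcomp Require Import all_boot all_order all_algebra ring zify.
From Stdlib Require Import FunctionalExtensionality.
Set Implicit Arguments. Unset Strict Implicit. Unset Printing Implicit Defensive.
Import Order.TTheory GRing.Theory Order.DefaultSeqLexiOrder.
Local Open Scope ring_scope.

(* Let u := xi x and v := xi y. As xi is onto, x and y lie in the associative
   algebra generated by u and v. Order words by length and then
   reverse-lexicographically, and call the largest word in the support of a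
   series its leading word. By Ree's theorem a Lie element is orthogonal to
   every proper shuffle; in characteristic zero this makes the leading word of
   a Lie element a Lyndon word. Distinct Lyndon words do not commute, hence
   freely generate a free monoid, so the leading word of a polynomial in u and
   v is the image of one of its monomials. Since x and y have leading words of
   length one, so do u and v (after replacing v by v - c u when their leading
   words coincide): xi is linear. Finally the images of the symmetric elements
   x + y and [x - y, [x, y]] must be symmetric, which forces xi x = a x + b y
   and xi y = b x + a y; the formula for the inverse is matrix inversion. *)

Lemma sum_nat_delta2 (R : nmodType) m n i0 j0 (c : R) : (i0 < m)%N -> (j0 < n)%N ->
  \sum_(0 <= i < m) \sum_(0 <= j < n) (if (i == i0) && (j == j0) then c else 0) = c.
Proof.
have delta k k0 (F : nat -> R) : (k0 < k)%N ->
    \sum_(0 <= l < k) (if l == k0 then F l else 0) = F k0.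
  move=> lt_k0; rewrite -big_mkcond /= -big_filter filter_pred1_uniq ?big_seq1 //.
    exact: iota_uniq.
  by rewrite mem_index_iota.
move=> lt_i0 lt_j0; rewrite -[RHS](delta m i0 (fun=> c)) //; apply: eq_bigr => i _.
case: eqP => _ /=; first by rewrite (delta n j0 (fun=> c)).
by rewrite big1.
Qed.

Lemma big_partition_undup (R : nmodType) (I J : eqType) (r : seq I) (key : I -> J)
    (F : I -> R) :
  \sum_(i <- r) F i = \sum_(j <- undup (map key r)) \sum_(i <- r | key i == j) F i.
Proof.
under [RHS]eq_bigr => j _ do rewrite big_mkcond /=.
rewrite exchange_big /=; apply: eq_big_seq => i ri.
rewrite (bigD1_seq (key i)) ?undup_uniq ?mem_undup ?map_f //= eqxx big1 ?addr0 //.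
by move=> j /negPf; rewrite eq_sym => ->.
Qed.

Lemma seq_argmin disp (T : orderType disp) (I : eqType) (F : I -> T) (S : seq I) :
  S != [::] -> exists2 i, i \in S & forall j, j \in S -> (F i <= F j)%O.
Proof.
elim: S => [|i0 S IH] // _; have [->|/IH [i iS min_i]] := eqVneq S [::].
  by exists i0 => [|j]; rewrite ?mem_seq1 // => /eqP ->.
have [le_i0|lt_i] := leP (F i0) (F i).
  exists i0 => [|j]; rewrite ?mem_head // inE => /predU1P [->|/min_i]//.
  exact: le_trans.
exists i => [|j]; first by rewrite inE iS orbT.
by rewrite inE => /predU1P [->|/min_i] //; apply: ltW.
Qed.

Lemma seq_argmax disp (T : orderType disp) (I : eqType) (F : I -> T) (S : seq I) :
  S != [::] -> exists2 i, i \in S & forall j, j \in S -> (F j <= F i)%O.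
Proof. exact: (@seq_argmin _ T^d). Qed.

Definition words n : seq (seq bool) := [seq tval t | t : n.-tuple bool].

Lemma mem_words n w : (w \in words n) = (size w == n).
Proof.
apply/mapP/eqP => [[t _ ->]|<-]; first exact: size_tuple.
by exists (in_tuple w); rewrite ?mem_enum.
Qed.

Lemma cat_eq_prefix (T : eqType) (a b P Q : seq T) : a ++ P = b ++ Q ->
  (size a <= size b)%N -> b = a ++ drop (size a) b.
Proof.
move=> eq_ab le_ab; move/(congr1 (take (size a))): eq_ab.
rewrite take_size_cat // takel_cat // => pre_b.
by rewrite {1}pre_b cat_take_drop.
Qed.

Section SeriesAlgebra.
Variable K : fieldType.
Implicit Types f g h : ncser K.

Definition ncone : ncser K := fun w => if w == [::] then 1 else 0.

Definition lquot (c : bool) f : ncser K := fun w => f (c :: w).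

Lemma ncmul_nil f g : ncmul f g [::] = f [::] * g [::].
Proof. by rewrite /ncmul big_ord_recl big_ord0 addr0. Qed.

Lemma lquot_mul c f g :
  lquot c (ncmul f g) = ncadd (ncmul (lquot c f) g) (ncscale (f [::]) (lquot c g)).
Proof.
apply: functional_extensionality => w.
by rewrite /lquot /ncmul /ncadd /ncscale /= big_ord_recl /= addrC.
Qed.

Lemma ncmul_addl f1 f2 g : ncmul (ncadd f1 f2) g = ncadd (ncmul f1 g) (ncmul f2 g).
Proof.
apply: functional_extensionality => w.
by rewrite /ncmul /ncadd -big_split /=; apply: eq_bigr => i _; rewrite mulrDl.
Qed.

Lemma ncmul_scalel a f g : ncmul (ncscale a f) g = ncscale a (ncmul f g).
Proof.
apply: functional_extensionality => w.
by rewrite /ncmul /ncscale mulr_sumr; apply: eq_bigr => i _; rewrite mulrA.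
Qed.

Lemma ncmul_scaler a f g : ncmul f (ncscale a g) = ncscale a (ncmul f g).
Proof.
apply: functional_extensionality => w.
by rewrite /ncmul /ncscale mulr_sumr; apply: eq_bigr => i _; rewrite mulrCA.
Qed.

Lemma ncmulA f g h : ncmul (ncmul f g) h = ncmul f (ncmul g h).
Proof.
apply: functional_extensionality => w.
elim: w f g h => [|c w IH] f g h; first by rewrite !ncmul_nil mulrA.
change (lquot c (ncmul (ncmul f g) h) w = lquot c (ncmul f (ncmul g h)) w).
rewrite !lquot_mul ncmul_addl ncmul_scalel ncmul_nil /ncadd /ncscale IH.
by rewrite mulrDr addrA mulrA.
Qed.

Lemma ncmul1f f : ncmul ncone f = f.
Proof.
apply: functional_extensionality => w; case: w => [|c w].
  by rewrite ncmul_nil /ncone eqxx mul1r.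
change (lquot c (ncmul ncone f) w = f (c :: w)).
rewrite lquot_mul /ncadd /ncscale /ncone eqxx mul1r.
by rewrite /ncmul big1 ?add0r // => i _; rewrite /lquot /= mul0r.
Qed.

Lemma ncmulf1 f : ncmul f ncone = f.
Proof.
apply: functional_extensionality => w; elim: w f => [|c w IH] f.
  by rewrite ncmul_nil /ncone eqxx mulr1.
change (lquot c (ncmul f ncone) w = f (c :: w)).
by rewrite lquot_mul /ncadd /ncscale IH /lquot /ncone /= mulr0 addr0.
Qed.

End SeriesAlgebra.

(** * Shuffles and Ree's theorem *)

Section Shuffle.
Variable K : fieldType.
Implicit Types f g h : ncser K.

(* [shuffle_coef s f t] is the sum of [f w] over the shuffles [w] of [s] and
   [t], counted with multiplicity: the pairing of [f] with the shuffle product. *)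
Fixpoint shuffle_coef (s : seq bool) : ncser K -> seq bool -> K :=
  match s with
  | [::] => fun f t => f t
  | a :: s' => fix shuffle_coef_s (f : ncser K) (t : seq bool) {struct t} : K :=
      match t with
      | [::] => f (a :: s')
      | b :: t' => shuffle_coef s' (lquot a f) (b :: t') + shuffle_coef_s (lquot b f) t'
      end
  end.

Lemma shuffle_coef_nill f t : shuffle_coef [::] f t = f t.
Proof. by []. Qed.

Lemma shuffle_coef_nilr s f : shuffle_coef s f [::] = f s.
Proof. by case: s. Qed.

Lemma shuffle_coef_cons a s b t f :
  shuffle_coef (a :: s) f (b :: t) =
  shuffle_coef s (lquot a f) (b :: t) + shuffle_coef (a :: s) (lquot b f) t.
Proof. by []. Qed.

Arguments shuffle_coef : simpl never.

Lemma eq_shuffle_coef s t f g :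
  (forall w, size w = (size s + size t)%N -> f w = g w) ->
  shuffle_coef s f t = shuffle_coef s g t.
Proof.
elim: s t f g => [|a s IHs] t f g; first exact.
elim: t f g => [|b t IHt] f g eq_fg.
  by rewrite !shuffle_coef_nilr; apply: eq_fg; rewrite addn0.
rewrite !shuffle_coef_cons (IHs _ _ (lquot a g)) ?(IHt _ (lquot b g)) //.
  by move=> w sw; apply: eq_fg; rewrite /= sw addnS.
by move=> w sw; apply: eq_fg; rewrite /= sw addSn.
Qed.

Lemma shuffle_coef_lin s t a b f g :
  shuffle_coef s (fun w => a * f w + b * g w) t =
  a * shuffle_coef s f t + b * shuffle_coef s g t.
Proof.
elim: s t f g => [|c s IHs] t f g; first by [].
elim: t f g => [|d t IHt] f g; first by rewrite !shuffle_coef_nilr.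
by rewrite !shuffle_coef_cons IHs IHt !mulrDr addrACA.
Qed.

Lemma shuffle_coef_add s t f g :
  shuffle_coef s (ncadd f g) t = shuffle_coef s f t + shuffle_coef s g t.
Proof.
rewrite -[shuffle_coef s f t]mul1r -[shuffle_coef s g t]mul1r -shuffle_coef_lin.
by apply: eq_shuffle_coef => w _; rewrite /ncadd !mul1r.
Qed.

Lemma shuffle_coef_scale s t a f :
  shuffle_coef s (ncscale a f) t = a * shuffle_coef s f t.
Proof.
rewrite -[RHS]addr0 -(mul0r (shuffle_coef s f t)) -shuffle_coef_lin.
by apply: eq_shuffle_coef => w _; rewrite /ncscale mul0r addr0.
Qed.

Lemma shuffle_coef_mul s t f g :
  shuffle_coef s (ncmul f g) t =
  \sum_(0 <= i < (size s).+1) \sum_(0 <= j < (size t).+1)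
    shuffle_coef (take i s) f (take j t) * shuffle_coef (drop i s) g (drop j t).
Proof.
elim: s t f g => [|a s IHs] t f g.
  by rewrite big_nat1 big_mkord.
elim: t f g => [|b t IHt] f g.
  rewrite shuffle_coef_nilr /ncmul big_mkord; apply: eq_bigr => i _.
  by rewrite big_nat1 !shuffle_coef_nilr.
rewrite shuffle_coef_cons !lquot_mul !shuffle_coef_add !shuffle_coef_scale IHs IHt.
rewrite [RHS]big_nat_recl // [in RHS]big_nat_recl //= shuffle_coef_cons mulrDr.
under [X in _ = _ + X]eq_bigr => i _ do
  rewrite big_nat_recl //= shuffle_coef_nilr -/(lquot a f (take i s)).
under [X in _ = _ + X]eq_bigr => i _ do
  under eq_bigr => j _ do rewrite shuffle_coef_cons mulrDl.
under [X in X + _ + _ = _]eq_bigr => i _ do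
  rewrite big_nat_recl //= shuffle_coef_nilr.
rewrite [X in _ + (X + _) = _]big_nat_recl //=.
under [X in _ = _ + X]eq_bigr => i _ do rewrite big_split addrA.
rewrite [X in _ = _ + X]big_split /= !shuffle_coef_nill.
under [X in _ + (X + _ + _) = _]eq_bigr => j _ do rewrite shuffle_coef_nill.
under [X in _ = _ + X + _]eq_bigr => j _ do rewrite shuffle_coef_nill.
rewrite /lquot; ring.
Qed.

Definition shuffle_primitive f :=
  f [::] = 0 /\ forall s t, s != [::] -> t != [::] -> shuffle_coef s f t = 0.

Lemma shuffle_coef_primitive f s t : shuffle_primitive f ->
  shuffle_coef s f t = if s == [::] then f t else if t == [::] then f s else 0.
Proof.
case=> f0 fprim; case: eqP => [->|/eqP s0] //; case: eqP => [->|/eqP t0].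
  exact: shuffle_coef_nilr.
exact: fprim.
Qed.

Lemma shuffle_coef_mul_primitive s t f g : s != [::] -> t != [::] ->
  shuffle_primitive f -> shuffle_primitive g ->
  shuffle_coef s (ncmul f g) t = f t * g s + f s * g t.
Proof.
move=> s0 t0 pf pg; rewrite shuffle_coef_mul.
have [m_gt0 n_gt0] : (0 < size s)%N /\ (0 < size t)%N by rewrite !lt0n !size_eq0.
transitivity (\sum_(0 <= i < (size s).+1) \sum_(0 <= j < (size t).+1)
   ((if (i == 0%N) && (j == size t) then f t * g s else 0) +
    (if (i == size s) && (j == 0%N) then f s * g t else 0))).
  apply: eq_big_nat => i /andP[_]; rewrite ltnS => le_is.
  apply: eq_big_nat => j /andP[_]; rewrite ltnS => le_jt.
  rewrite !(shuffle_coef_primitive _ _ pf) !(shuffle_coef_primitive _ _ pg).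
  rewrite -!size_eq0 !size_takel // !size_drop !subn_eq0.
  have [->|i_gt0] := posnP i; have [->|j_gt0] := posnP j.
  - by rewrite take0 pf.1 mul0r !(eq_sym 0%N) !eqn0Ngt m_gt0 n_gt0 addr0.
  - rewrite leqNgt m_gt0 andbF addr0 drop0 eqn_leq le_jt /=.
    by case: leqP => [/take_oversize ->|_]; rewrite ?mulr0.
  - rewrite (leqNgt (size t)) n_gt0 add0r drop0 eqn_leq le_is andbT /=.
    by case: leqP => [/take_oversize ->|_]; rewrite ?mulr0.
  - by rewrite mul0r !andbF addr0.
under eq_bigr do rewrite big_split.
by rewrite big_split /= !sum_nat_delta2.
Qed.

Lemma shuffle_primitive_deg1 f : f [::] = 0 ->
  (forall w, (1 < size w)%N -> f w = 0) -> shuffle_primitive f.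
Proof.
move=> f0 f_deg1; split=> // s t s0 t0.
rewrite -(mul0r (shuffle_coef s f t)) -shuffle_coef_scale.
apply: eq_shuffle_coef => w sw; rewrite /ncscale mul0r f_deg1 // sw.
by case: s s0 {sw} => // a s _; case: t t0 => // b t _; rewrite /= addnS.
Qed.

Lemma shuffle_primitive_lie f g :
  shuffle_primitive f -> shuffle_primitive g -> shuffle_primitive (nclie f g).
Proof.
move=> pf pg; split=> [|s t s0 t0].
  by rewrite /nclie !ncmul_nil pf.1 pg.1 !mul0r subrr.
have := shuffle_coef_lin s t 1 (-1) (ncmul f g) (ncmul g f).
rewrite !shuffle_coef_mul_primitive // mul1r mulN1r.
rewrite (eq_shuffle_coef (g := nclie f g)) => [->|w _]; first by ring.
by rewrite /nclie mul1r mulN1r.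
Qed.

Theorem L2_shuffle_primitive f : in_L2 f -> shuffle_primitive f.
Proof.
elim=> {f} [||f g _ pf _ pg|a f _ pf|f g _ pf _ pg].
- apply: shuffle_primitive_deg1 => // w; rewrite /ncx.
  by case: eqP => // ->.
- apply: shuffle_primitive_deg1 => // w; rewrite /ncy.
  by case: eqP => // ->.
- split=> [|s t s0 t0]; first by rewrite /ncadd pf.1 pg.1 addr0.
  by rewrite shuffle_coef_add pf.2 // pg.2 // addr0.
- split=> [|s t s0 t0]; first by rewrite /ncscale pf.1 mulr0.
  by rewrite shuffle_coef_scale pf.2 // mulr0.
- exact: shuffle_primitive_lie.
Qed.

Lemma L2_nil f : in_L2 f -> f [::] = 0.
Proof. by move/L2_shuffle_primitive=> []. Qed.

End Shuffle.

(** * Lexicographic order, maximal shuffles and Lyndon words *)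

Section LexOrder.
Local Open Scope order_scope.
Implicit Types s t u v w : seq bool.

Lemma lexi_cat2l p u v : (p ++ u <= p ++ v) = (u <= v).
Proof. by elim: p => //= a p IH; rewrite eqhead_lexiE. Qed.

Lemma ltxi_cat2l p u v : (p ++ u < p ++ v) = (u < v).
Proof. by elim: p => //= a p IH; rewrite eqhead_ltxiE. Qed.

Lemma lexi_prefix u v : u <= u ++ v.
Proof. by rewrite -[X in X <= _]cats0 lexi_cat2l lexi0s. Qed.

Lemma ltxi_catl_neq u v s t : size u = size v -> u != v -> (u ++ s < v ++ t) = (u < v).
Proof.
elim: u v => [|a u IH] [|b v] //= [/IH {}IH]; rewrite eqseq_cons.
by case: (eqVneq a b) => [-> /IH|/neqhead_ltxiE ab _]; rewrite ?eqhead_ltxiE ?ab.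
Qed.

Lemma lexi_cat_cases t s r : t <= s ++ r ->
  (exists2 rho, t = s ++ rho & rho != [::]) \/ t <= s.
Proof.
elim: s t => [|c s IH] [|b t] //; try by [right | left; exists (b :: t)].
case: (eqVneq b c) => [->|bc]; last by rewrite /= !neqhead_lexiE // => ?; right.
by rewrite /= !eqhead_lexiE => /IH [[rho -> rho0]|]; [left; exists rho | right].
Qed.

Fixpoint max_shuffle s : seq bool -> seq bool :=
  match s with
  | [::] => fun t => t
  | a :: s' => fix max_shuffle_s t :=
      match t with
      | [::] => a :: s'
      | b :: t' => Order.max (a :: max_shuffle s' (b :: t')) (b :: max_shuffle_s t')
      end
  end.

Lemma max_shuffle_nilr s : max_shuffle s [::] = s.
Proof. by case: s. Qed.

Lemma max_shuffle_cons a s b t : max_shuffle (a :: s) (b :: t) =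
  Order.max (a :: max_shuffle s (b :: t)) (b :: max_shuffle (a :: s) t).
Proof. by []. Qed.

Arguments max_shuffle : simpl never.

Lemma size_max_shuffle s t : size (max_shuffle s t) = (size s + size t)%N.
Proof.
elim: s t => [|a s IHs] t; first by [].
elim: t => [|b t IHt]; first by rewrite max_shuffle_nilr addn0.
by rewrite max_shuffle_cons maxElt; case: ifP => _ /=; rewrite ?IHt ?IHs ?addnS.
Qed.

Lemma catC_le_max_shuffle s t : t ++ s <= max_shuffle s t.
Proof.
elim: t s => [|b t IHt] [|a s] //; try by rewrite ?cats0 ?max_shuffle_nilr.
by rewrite max_shuffle_cons le_max /= eqhead_lexiE IHt orbT.
Qed.

Lemma max_shuffle_catl_le p s t : t <= s ->
  max_shuffle (p ++ s) t <= max_shuffle s (p ++ t).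
Proof.
move: {2}(size s + size t)%N (leqnn (size s + size t)) => n.
elim: n s t p => [|n IHn] s t p.
  by rewrite leqn0 addn_eq0 => /andP[/nilP -> /nilP ->]; rewrite !cats0 max_shuffle_nilr.
case: t => [|b t] sz_st le_ts; first by rewrite cats0 max_shuffle_nilr catC_le_max_shuffle.
case: s sz_st le_ts => [|a s] // sz_st le_ts.
elim: p => [|c p IHp] //=.
rewrite max_shuffle_cons ge_max; apply/andP; split.
  by rewrite max_shuffle_cons le_max /= eqhead_lexiE IHp orbT.
case: (eqVneq b a) le_ts => [<-|ba]; last first.
  rewrite !neqhead_lexiE // => lt_ba.
  by rewrite max_shuffle_cons le_max (neqhead_lexiE _ _ ba) lt_ba.
rewrite eqhead_lexiE => le_ts.
rewrite max_shuffle_cons le_max /= eqhead_lexiE.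
have /= := IHn s t (c :: p ++ [:: b]); rewrite -!catA /= => -> //.
by move: sz_st; rewrite /= addSn addnS !ltnS => /ltnW.
Qed.

Lemma max_shuffle_catE s t : (forall i, (i < size s)%N -> t <= drop i s) ->
  max_shuffle s t = s ++ t.
Proof.
elim: s => [|a s IHs] suf_ge; first by [].
case: t IHs suf_ge => [|b t] IHs suf_ge; first by rewrite max_shuffle_nilr cats0.
rewrite max_shuffle_cons IHs => [|i lt_is]; last exact: (suf_ge i.+1).
apply/max_idPl; have := suf_ge 0%N isT; rewrite drop0.
case: (eqVneq b a) => [<-|ba]; last by rewrite !neqhead_lexiE.
rewrite !eqhead_lexiE -IHs => [le_ts|i lt_is]; last exact: (suf_ge i.+1).
exact: (max_shuffle_catl_le [:: b] le_ts).
Qed.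

Definition lyndon (a : seq bool) := forall i, (0 < i < size a)%N -> a < drop i a.

Lemma min_suffix_max_shuffle a k : (0 < k < size a)%N -> drop k a <= a ->
  (forall j, (0 < j < size a)%N -> drop k a <= drop j a) ->
  max_shuffle (take k a) (drop k a) = a.
Proof.
move=> /andP[k_gt0 lt_ka] le_ta min_k.
rewrite -[RHS](cat_take_drop k) max_shuffle_catE // => j.
rewrite size_takel ?(ltnW lt_ka) // => lt_jk.
have drop_j : drop j (take k a) ++ drop k a = drop j a.
  by rewrite -{3}(cat_take_drop k a) drop_cat size_takel ?(ltnW lt_ka) // lt_jk.
set s := drop j (take k a); set t := drop k a.
have le_t_st : t <= s ++ t.
  rewrite drop_j; case: j {drop_j s} lt_jk => [|j] lt_jk; first by rewrite drop0.
  by rewrite min_k // (ltn_trans lt_jk lt_ka).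
have [[rho def_t rho0]|] // := lexi_cat_cases le_t_st.
have le_rt : rho <= t by move: le_t_st; rewrite {1}def_t lexi_cat2l.
have le_tr : t <= rho.
  have -> : rho = drop (k + size s) a by rewrite addnC -drop_drop -/t {1}def_t drop_size_cat.
  have sz_t : (size a - k)%N = (size s + size rho)%N.
    by rewrite -size_drop -/t def_t size_cat.
  have : size rho != 0%N by rewrite size_eq0.
  by move=> ?; apply: min_k; lia.
have /(congr1 size) : rho = t by apply: le_anti; rewrite le_rt le_tr.
rewrite {1}def_t size_cat /s size_drop size_takel ?(ltnW lt_ka) // => ?.
by exfalso; lia.
Qed.

End LexOrder.

Section TwoWordCodes.
Implicit Types a b s t u v w : seq bool.

Lemma lyndon_noncommuting_shorter a b : a != [::] -> lyndon b -> (size a < size b)%N ->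
  a ++ b != b ++ a.
Proof.
move=> a0 lyn_b lt_ab; apply/eqP => ab_ba.
have pre_b : take (size a) b = a.
  by have := congr1 (take (size a)) ab_ba; rewrite take_size_cat // take_cat lt_ab.
have suf_b : drop (size b - size a) b = a.
  have := congr1 (drop (size b)) ab_ba.
  by rewrite drop_cat ltnNge (ltnW lt_ab) /= drop_size_cat.
have a_gt0 : (0 < size a)%N by rewrite lt0n size_eq0.
have : (0 < size b - size a < size b)%N by lia.
move/lyn_b; rewrite suf_b ltNge -{1}pre_b.
by rewrite -{2}(cat_take_drop (size a) b) lexi_prefix.
Qed.

Lemma lyndon_noncommuting a b : a != [::] -> b != [::] -> lyndon a -> lyndon b -> a != b ->
  a ++ b != b ++ a.
Proof.
move=> a0 b0 lyn_a lyn_b neq_ab; case: (ltngtP (size a) (size b)) => [lt_ab|lt_ba|eq_ab].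
- exact: lyndon_noncommuting_shorter.
- by rewrite eq_sym lyndon_noncommuting_shorter.
- apply: contra neq_ab => /eqP/(congr1 (take (size a))).
  by rewrite take_size_cat // eq_ab take_size_cat // => ->.
Qed.

Definition word_subst a b m := flatten [seq if c then b else a | c <- m].

Lemma word_subst_cons a b c m :
  word_subst a b (c :: m) = (if c then b else a) ++ word_subst a b m.
Proof. by []. Qed.

Lemma word_substC a b m : word_subst b a (map negb m) = word_subst a b m.
Proof. by elim: m => //= c m IH; rewrite !word_subst_cons IH; case: c. Qed.

Lemma word_subst_cat a b m :
  word_subst a (a ++ b) m = word_subst a b (word_subst [:: false] [:: false; true] m).
Proof.
elim: m => // c m IH; rewrite !word_subst_cons IH.
by case: c => //=; rewrite /word_subst /= -catA.
Qed.

Lemma word_subst_eq0 a b m : a != [::] -> b != [::] ->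
  (word_subst a b m == [::]) = (m == [::]).
Proof.
case: m => // c m a0 b0; rewrite word_subst_cons -size_eq0 size_cat addn_eq0 size_eq0.
by case: c; rewrite ?(negbTE a0) ?(negbTE b0).
Qed.

Lemma word_subst_letter a b m c : a != [::] -> b != [::] -> word_subst a b m = [:: c] ->
  a = [:: c] \/ b = [:: c].
Proof.
case: m => [|c' m] // a0 b0; rewrite word_subst_cons.
have : (if c' then b else a) != [::] by case: c'.
case def_ab: (if c' then b else a) => [|d r] // _ [<-].
by case: r def_ab => // def_ab _; case: c' def_ab => <-; [right | left].
Qed.

Lemma word_subst_catl_neq a b m1 m2 : injective (word_subst a b) ->
  a ++ word_subst a (a ++ b) m1 != (a ++ b) ++ word_subst a (a ++ b) m2.
Proof.
move=> inj_ab; rewrite -catA eqseq_cat // eqxx /= (word_subst_cat a b m1) (word_subst_cat a b m2).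
rewrite -(word_subst_cons a b true); apply/eqP => /inj_ab.
by case: m1 => [|[] m1].
Qed.

(* If [a ++ P = b ++ Q] with [a] shorter, then [b = a ++ b'] and the equation
   descends to the shorter pair [(a, b')]. *)
Lemma word_subst_inj a b : a != [::] -> b != [::] -> a ++ b != b ++ a ->
  injective (word_subst a b).
Proof.
move: {2}(size a + size b)%N (leqnn (size a + size b)) => n.
elim: n a b => [|n IHn] a b sz_ab a0 b0 ab_ba.
  by move: sz_ab a0; rewrite leqn0 addn_eq0 size_eq0 => /andP[/eqP->].
have no_overlap u v m1 m2 : (size u + size v <= n.+1)%N -> u != [::] -> v != [::] ->
    u ++ v != v ++ u -> (size u <= size v)%N ->
    u ++ word_subst u v m1 != v ++ word_subst u v m2.
  move=> sz_uv u0 v0 uv_vu le_uv; apply/eqP => eq_uv.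
  have def_v := cat_eq_prefix eq_uv le_uv.
  move: eq_uv uv_vu sz_uv; rewrite def_v; set v' := drop (size u) v => eq_uv uv_vu sz_uv.
  have v'0 : v' != [::] by apply: contra uv_vu => /eqP->; rewrite cats0.
  have uv'_v'u : u ++ v' != v' ++ u.
    by apply: contra uv_vu => /eqP uv'; rewrite -catA uv' catA.
  have u_gt0 : (0 < size u)%N by rewrite lt0n size_eq0.
  have sz_uv' : (size u + size v' <= n)%N by move: sz_uv; rewrite size_cat; lia.
  by move/eqP: eq_uv; apply/negP/word_subst_catl_neq/IHn.
elim=> [|c1 m1 IHm] [|c2 m2] //; rewrite ?word_subst_cons.
- by move/esym/eqP; rewrite -word_subst_cons word_subst_eq0.
- by move/eqP; rewrite -word_subst_cons word_subst_eq0.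
case: (eqVneq c1 c2) => [<- /(congr1 (drop (size (if c1 then b else a))))|c12].
  by rewrite !drop_size_cat // => /IHm ->.
have no_overlap_ab m m' : a ++ word_subst a b m != b ++ word_subst a b m'.
  have [le_ab|lt_ba] := leqP (size a) (size b); first exact: no_overlap.
  rewrite eq_sym -(word_substC a b m) -(word_substC a b m') no_overlap ?(ltnW lt_ba) //.
    by rewrite addnC.
  by rewrite eq_sym.
case: c1 c2 c12 => [] [] // _ /eqP; first by rewrite eq_sym (negbTE (no_overlap_ab _ _)).
by rewrite (negbTE (no_overlap_ab _ _)).
Qed.

End TwoWordCodes.

(** * Leading words *)

(* The leading word of a series is its largest word for [deglex]: a longest
   word of its support, and among those the lexicographically smallest. *)
Definition deglex (w : seq bool) : nat *l (seq bool)^d := (size w, w).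

Lemma deglex_inj : injective deglex.
Proof. by move=> u w []. Qed.

Lemma deglex_lt u w : (deglex u < deglex w)%O =
  (size u < size w)%N || (size u == size w) && (w < u)%O.
Proof. by rewrite /deglex ltEprodlexi /= leEnat ltEdual; case: ltngtP. Qed.

Section LeadingWord.
Variable K : fieldType.
Implicit Types f g h : ncser K.

Definition is_lead f a := f a != 0 /\ forall w, (deglex a < deglex w)%O -> f w = 0.

Lemma lead_ge f a w : is_lead f a -> f w != 0 -> (deglex w <= deglex a)%O.
Proof. by case=> _ lead_a; apply: contraR; rewrite -ltNge => /lead_a ->. Qed.

Lemma lead_uniq f a b : is_lead f a -> is_lead f b -> a = b.
Proof.
move=> lead_a lead_b; apply: deglex_inj; apply: le_anti.
by rewrite (lead_ge lead_b lead_a.1) (lead_ge lead_a lead_b.1).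
Qed.

Lemma lead_eq0_long f a w : is_lead f a -> (size a < size w)%N -> f w = 0.
Proof. by move=> [_ lead_a] lt_aw; apply: lead_a; rewrite deglex_lt lt_aw. Qed.

Lemma lead_eq0_lt f a w : is_lead f a -> size w = size a -> (w < a)%O -> f w = 0.
Proof. by move=> [_ lead_a] sz_w lt_wa; apply: lead_a; rewrite deglex_lt sz_w eqxx lt_wa orbT. Qed.

Lemma lead_exists f N : (forall w, (N < size w)%N -> f w = 0) -> (exists w, f w != 0) ->
  exists a, is_lead f a.
Proof.
move=> f_deg [w0 fw0].
pose S := [seq w <- flatten [seq words n | n <- iota 0 N.+1] | f w != 0].
have memS w : (w \in S) = (f w != 0).
  rewrite mem_filter andb_idr // => fw; apply/flattenP.
  exists (words (size w)); last by rewrite mem_words.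
  apply: map_f; rewrite mem_iota /= add0n ltnS leqNgt.
  by apply: contra fw => /f_deg ->.
have [|a Sa max_a] := seq_argmax deglex (S := S).
  by apply/eqP => S0; move: (memS w0); rewrite S0 fw0.
exists a; split=> [|w]; first by rewrite -memS.
by rewrite ltNge; apply: contraNeq => fw; rewrite max_a ?memS.
Qed.

Lemma ncmul_eq0_long f g m n :
  (forall w, (m < size w)%N -> f w = 0) -> (forall w, (n < size w)%N -> g w = 0) ->
  forall w, (m + n < size w)%N -> ncmul f g w = 0.
Proof.
move=> f_deg g_deg w lt_w; rewrite /ncmul big1 // => i _.
have le_iw : (i <= size w)%N by rewrite -ltnS.
have [le_im|lt_mi] := leqP i m.
  by rewrite g_deg ?mulr0 // size_drop; lia.
by rewrite f_deg ?mul0r // size_takel.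
Qed.

Lemma ncmul_split f g m n w :
  (forall w, (m < size w)%N -> f w = 0) -> (forall w, (n < size w)%N -> g w = 0) ->
  size w = (m + n)%N -> ncmul f g w = f (take m w) * g (drop m w).
Proof.
move=> f_deg g_deg sz_w; have lt_m : (m < (size w).+1)%N by rewrite sz_w ltnS leq_addr.
rewrite /ncmul (bigD1 (Ordinal lt_m)) //= big1 ?addr0 // => i /eqP/val_eqP /= ne_im.
have le_iw : (i <= size w)%N by rewrite -ltnS.
case: (ltngtP i m) ne_im => // [lt_im|lt_mi] _.
  by rewrite g_deg ?mulr0 // size_drop; lia.
by rewrite f_deg ?mul0r // size_takel.
Qed.

Lemma lead_mul f g a b : is_lead f a -> is_lead g b -> is_lead (ncmul f g) (a ++ b).
Proof.
move=> lead_a lead_b; have f_deg := lead_eq0_long lead_a; have g_deg := lead_eq0_long lead_b.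
split=> [|w].
  rewrite (ncmul_split f_deg g_deg) ?size_cat // take_size_cat // drop_size_cat //.
  by rewrite mulf_neq0 ?lead_a.1 ?lead_b.1.
rewrite deglex_lt size_cat => /orP[lt_w|/andP[/eqP sz_w lt_w]].
  exact: ncmul_eq0_long f_deg g_deg _ lt_w.
rewrite (ncmul_split f_deg g_deg) //.
have sz_take : size (take (size a) w) = size a by rewrite size_takel // -sz_w leq_addr.
move: lt_w; rewrite -{1}(cat_take_drop (size a) w).
have [eq_a|ne_a] := eqVneq (take (size a) w) a.
  rewrite eq_a ltxi_cat2l => lt_b.
  by rewrite (lead_eq0_lt lead_b) ?mulr0 // size_drop -sz_w; lia.
rewrite ltxi_catl_neq // => lt_a.
by rewrite (lead_eq0_lt lead_a) ?mul0r.
Qed.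

Lemma lead_ncone : is_lead (ncone K) [::].
Proof.
split=> [|w]; first by rewrite /ncone eqxx oner_neq0.
by rewrite deglex_lt ltxis0 andbF orbF /ncone lt0n size_eq0 => /negbTE->.
Qed.

Lemma lead_ncx : is_lead (ncx K) [:: false].
Proof.
split=> [|w]; first by rewrite /ncx eqxx oner_neq0.
by rewrite /ncx; case: eqP => // ->; rewrite ltxx.
Qed.

Lemma lead_ncy : is_lead (ncy K) [:: true].
Proof.
split=> [|w]; first by rewrite /ncy eqxx oner_neq0.
by rewrite /ncy; case: eqP => // ->; rewrite ltxx.
Qed.

Lemma shuffle_coef_max s t f :
  (forall w, size w = (size s + size t)%N -> (w < max_shuffle s t)%O -> f w = 0) ->
  exists2 N, (0 < N)%N & shuffle_coef s f t = N%:R * f (max_shuffle s t).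
Proof.
elim: s t f => [|a s IHs] t f below0; first by exists 1%N; rewrite ?mul1r.
elim: t f below0 => [|b t IHt] f below0.
  by exists 1%N; rewrite ?mul1r // shuffle_coef_nilr max_shuffle_nilr.
set X := a :: max_shuffle s (b :: t); set Y := b :: max_shuffle (a :: s) t.
have [N1 N1_gt0 E1] : exists2 N, (0 < N)%N & shuffle_coef s (lquot a f) (b :: t) = N%:R * f X.
  apply: IHs => w sw lt_w; apply: below0; first by rewrite /= sw.
  by rewrite max_shuffle_cons lt_max /X eqhead_ltxiE lt_w.
have [N2 N2_gt0 E2] : exists2 N, (0 < N)%N & shuffle_coef (a :: s) (lquot b f) t = N%:R * f Y.
  apply: IHt => w sw lt_w; apply: below0; first by rewrite /= sw addnS.
  by rewrite max_shuffle_cons lt_max /Y eqhead_ltxiE lt_w orbT.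
have fXY w : w \in [:: X; Y] -> (w < max_shuffle (a :: s) (b :: t))%O -> f w = 0.
  rewrite !inE => /orP[] /eqP-> lt_w; apply: below0 => //.
    by rewrite /X -cat1s size_cat size_max_shuffle /=; lia.
  by rewrite /Y -cat1s size_cat size_max_shuffle /=; lia.
rewrite shuffle_coef_cons E1 E2 max_shuffle_cons -/X -/Y in fXY *.
case: ltgtP fXY => [lt_XY|lt_YX|<-] fXY.
- by exists N2; rewrite // fXY ?mem_head // mulr0 add0r.
- by exists N1; rewrite // (fXY Y) ?inE ?eqxx ?orbT // mulr0 addr0.
- by exists (N1 + N2)%N; rewrite ?addn_gt0 ?N1_gt0 // natrD mulrDl.
Qed.

Hypothesis charK0 : [pchar K] =i pred0.

(* If some proper suffix of [a] were at most [a], then for the least proper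
   suffix [t] of [a = s ++ t] the word [a] is the largest shuffle of [s] and
   [t], so [shuffle_coef s f t] is a positive multiple of [f a], contradicting
   Ree's theorem. *)
Lemma lead_lyndon f a : in_L2 f -> is_lead f a -> lyndon a.
Proof.
move=> Lf [fa lead_a] i /andP[i_gt0 lt_ia]; rewrite ltNge; apply/negP => le_ia.
have mem_suf j : (j \in iota 1 (size a).-1) = (0 < j < size a)%N.
  by rewrite mem_iota add1n prednK // (ltn_trans i_gt0 lt_ia).
have [|k] := seq_argmin (fun j => drop j a) (S := iota 1 (size a).-1).
  by apply/eqP => S0; move: (mem_suf i); rewrite S0 i_gt0 lt_ia.
rewrite mem_suf => /andP[k_gt0 lt_ka] min_k.
have max_a : max_shuffle (take k a) (drop k a) = a.
  apply: min_suffix_max_shuffle => [||j j_in]; first by rewrite k_gt0.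
    by apply: le_trans le_ia; rewrite min_k ?mem_suf ?i_gt0.
  by rewrite min_k ?mem_suf.
have [|N N_gt0 EN] := @shuffle_coef_max (take k a) (drop k a) f.
  rewrite max_a -size_cat cat_take_drop => w sw lt_wa; apply: lead_a.
  by rewrite deglex_lt sw eqxx lt_wa orbT.
have := (L2_shuffle_primitive Lf).2 (take k a) (drop k a).
rewrite EN max_a -!size_eq0 size_takel ?(ltnW lt_ka) // size_drop subn_eq0 -ltnNge.
rewrite -lt0n k_gt0 lt_ka => /(_ isT isT) /eqP; rewrite mulf_eq0 (negbTE fa) orbF.
by move/pcharf0P: charK0 => ->; rewrite eqn0Ngt N_gt0.
Qed.

End LeadingWord.

(** * The associative algebra generated by two series *)

Section GeneratedAlgebra.
Variable K : fieldType.
Variables u v : ncser K.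
Implicit Types f g h : ncser K.

Inductive in_gen_alg : ncser K -> Prop :=
  | alg_u : in_gen_alg u
  | alg_v : in_gen_alg v
  | alg_add f g : in_gen_alg f -> in_gen_alg g -> in_gen_alg (ncadd f g)
  | alg_scale a f : in_gen_alg f -> in_gen_alg (ncscale a f)
  | alg_mul f g : in_gen_alg f -> in_gen_alg g -> in_gen_alg (ncmul f g).

Lemma gen_alg_lie f g : in_gen_alg f -> in_gen_alg g -> in_gen_alg (nclie f g).
Proof.
have -> : nclie f g = ncadd (ncmul f g) (ncscale (-1) (ncmul g f)).
  by apply: functional_extensionality => w; rewrite /nclie /ncadd /ncscale; ring.
by move=> Af Ag; apply: alg_add; [|apply: alg_scale]; apply: alg_mul.
Qed.

Lemma alg_linear_part f : in_gen_alg f -> u [::] = 0 -> v [::] = 0 ->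
  f [::] = 0 /\ exists al be, forall c, f [:: c] = al * u [:: c] + be * v [:: c].
Proof.
move=> Af u0 v0; elim: Af => {f}
  [||f g _ [f0 [a1 [b1 f1]]] _ [g0 [a2 [b2 g1]]]|a f _ [f0 [a1 [b1 f1]]]|f g _ [f0 _] _ [g0 _]].
- by split=> //; exists 1, 0 => c; ring.
- by split=> //; exists 0, 1 => c; ring.
- split; first by rewrite /ncadd f0 g0 addr0.
  by exists (a1 + a2), (b1 + b2) => c; rewrite /ncadd f1 g1; ring.
- split; first by rewrite /ncscale f0 mulr0.
  by exists (a * a1), (a * b1) => c; rewrite /ncscale f1; ring.
- split; first by rewrite ncmul_nil f0 mul0r.
  by exists 0, 0 => c; rewrite /ncmul !big_ord_recl big_ord0 /= f0 g0; ring.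
Qed.

Definition mono (m : seq bool) : ncser K :=
  foldr (fun c acc => ncmul (if c then v else u) acc) (ncone K) m.

Lemma mono_cat m1 m2 : mono (m1 ++ m2) = ncmul (mono m1) (mono m2).
Proof. by elim: m1 => [|c m1 IH] /=; rewrite ?ncmul1f // IH ncmulA. Qed.

Definition poly_eval (l : seq (K * seq bool)) : ncser K :=
  fun w => \sum_(p <- l) p.1 * mono p.2 w.

Lemma poly_eval_mul l1 l2 : ncmul (poly_eval l1) (poly_eval l2) =
  poly_eval [seq (p.1 * q.1, p.2 ++ q.2) | p <- l1, q <- l2].
Proof.
apply: functional_extensionality => w; rewrite /poly_eval big_allpairs_dep /=.
under [LHS]eq_bigr => i _ do rewrite mulr_suml.
rewrite exchange_big /=; apply: eq_bigr => p _.
under eq_bigr => i _ do rewrite mulr_sumr.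
rewrite exchange_big /=; apply: eq_bigr => q _.
by rewrite mono_cat /ncmul mulr_sumr; apply: eq_bigr => i _; rewrite mulrACA.
Qed.

Lemma alg_poly_eval f : in_gen_alg f -> exists l, f = poly_eval l.
Proof.
have mono1 c : mono [:: c] = if c then v else u by rewrite /= ncmulf1.
elim=> {f} [||f g _ [l1 ->] _ [l2 ->]|a f _ [l ->]|f g _ [l1 ->] _ [l2 ->]].
- exists [:: (1, [:: false])]; apply: functional_extensionality => w.
  by rewrite /poly_eval big_seq1 mono1 mul1r.
- exists [:: (1, [:: true])]; apply: functional_extensionality => w.
  by rewrite /poly_eval big_seq1 mono1 mul1r.
- by exists (l1 ++ l2); apply: functional_extensionality => w; rewrite /poly_eval big_cat.
- exists [seq (a * p.1, p.2) | p <- l]; apply: functional_extensionality => w.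
  by rewrite /poly_eval /ncscale big_map mulr_sumr; apply: eq_bigr => p _; rewrite mulrA.
- by rewrite poly_eval_mul; eexists.
Qed.

Lemma poly_eval_reduced l : exists (S : seq (seq bool)) (c : seq bool -> K),
  [/\ uniq S, forall m, m \in S -> c m != 0 &
      forall w, poly_eval l w = \sum_(m <- S) c m * mono m w].
Proof.
pose c m := \sum_(p <- l | p.2 == m) p.1.
exists [seq m <- undup (map snd l) | c m != 0], c; split.
- by rewrite filter_uniq ?undup_uniq.
- by move=> m; rewrite mem_filter => /andP[].
move=> w; rewrite big_filter big_mkcond /= /poly_eval.
rewrite (big_partition_undup _ snd); apply: eq_bigr => m _.
have -> : \sum_(p <- l | p.2 == m) p.1 * mono p.2 w = c m * mono m w.
  by rewrite /c mulr_suml; apply: eq_bigr => p /eqP->.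
by case: eqP => // ->; rewrite mul0r.
Qed.

Lemma lead_mono a b m : is_lead u a -> is_lead v b -> is_lead (mono m) (word_subst a b m).
Proof.
move=> lead_a lead_b; elim: m => [|c m IH]; first exact: lead_ncone.
by rewrite word_subst_cons /=; apply: lead_mul => //; case: c.
Qed.

Lemma lead_poly_eval a b l : is_lead u a -> is_lead v b -> injective (word_subst a b) ->
  (exists w, poly_eval l w != 0) -> exists m, is_lead (poly_eval l) (word_subst a b m).
Proof.
move=> lead_a lead_b inj_ab [w0 fw0].
have [S [c [uniq_S c_neq0 def_f]]] := poly_eval_reduced l.
have [|m0 S_m0 max_m0] := seq_argmax (fun m => deglex (word_subst a b m)) (S := S).
  by apply: contraNneq fw0 => S0; rewrite def_f S0 big_nil.
have lead_m m := lead_mono m lead_a lead_b.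
exists m0; split=> [|w lt_w]; rewrite def_f.
  rewrite (bigD1_seq m0) //= big1_seq ?addr0 ?mulf_neq0 ?(lead_m m0).1 ?c_neq0 //.
  move=> m /andP[ne_m S_m]; rewrite (lead_m m).2 ?mulr0 // lt_neqAle max_m0 // andbT.
  by apply: contra ne_m => /eqP/deglex_inj/inj_ab->.
rewrite big1_seq // => m S_m; rewrite (lead_m m).2 ?mulr0 //.
exact: le_lt_trans (max_m0 m S_m) lt_w.
Qed.

End GeneratedAlgebra.

(** * Automorphisms of L_2 are linear *)

Section Linearity.
Variable K : fieldType.
Implicit Types f g h u v : ncser K.

Lemma L2_bounded f : in_L2 f -> exists N, forall w, (N < size w)%N -> f w = 0.
Proof.
have letter_deg c w : (1 < size w)%N -> (if w == [:: c] then 1 else 0 : K) = 0.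
  by case: eqP => // ->.
elim=> {f} [||f g _ [m f_deg] _ [n g_deg]|a f _ [n f_deg]|f g _ [m f_deg] _ [n g_deg]].
- by exists 1%N; apply: letter_deg.
- by exists 1%N; apply: letter_deg.
- exists (maxn m n) => w; rewrite gtn_max => /andP[lt_mw lt_nw].
  by rewrite /ncadd f_deg // g_deg // addr0.
- by exists n => w lt_nw; rewrite /ncscale f_deg // mulr0.
- exists (m + n)%N => w lt_w; rewrite /nclie (ncmul_eq0_long f_deg g_deg) //.
  by rewrite (ncmul_eq0_long g_deg f_deg) ?subr0 // addnC.
Qed.

Lemma L2_lead_exists f : in_L2 f -> (exists w, f w != 0) -> exists a, is_lead f a.
Proof. by move=> /L2_bounded [N f_deg]; apply: lead_exists f_deg. Qed.

Lemma L2_lead_neq_nil f a : in_L2 f -> is_lead f a -> a != [::].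
Proof. by move=> Lf [fa _]; apply: contraNneq fa => ->; rewrite L2_nil. Qed.

Definition lin_det u v := u [:: false] * v [:: true] - u [:: true] * v [:: false].

Lemma lin_detC u v : lin_det v u = - lin_det u v.
Proof. by rewrite /lin_det; ring. Qed.

Lemma lin_det_nonzero u v : lin_det u v != 0 -> exists w, u w != 0.
Proof.
move=> det_uv; have [u1|] := eqVneq (u [:: false]) 0; last by exists [:: false].
have [u2|] := eqVneq (u [:: true]) 0; last by exists [:: true].
by move: det_uv; rewrite /lin_det u1 u2 !mul0r subrr eqxx.
Qed.

Lemma gen_alg_lin_det_neq0 u v : in_gen_alg u v (ncx K) -> in_gen_alg u v (ncy K) ->
  u [::] = 0 -> v [::] = 0 -> lin_det u v != 0.
Proof.
move=> Ax Ay u0 v0.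
have [_ [al [be x1]]] := alg_linear_part Ax u0 v0.
have [_ [ga [de y1]]] := alg_linear_part Ay u0 v0.
apply/eqP => det0.
have : (al * de - be * ga) * lin_det u v = lin_det (ncx K) (ncy K).
  by rewrite /lin_det !x1 !y1; ring.
rewrite det0 mulr0 /lin_det /ncx /ncy /= mulr1 mulr0 subr0 => /esym/eqP.
by rewrite oner_eq0.
Qed.

Lemma gen_alg_shift u v v' c f : v = ncadd (ncscale c u) v' ->
  in_gen_alg u v f -> in_gen_alg u v' f.
Proof.
move=> def_v; elim=> {f} [||f g _ Af _ Ag|a f _ Af|f g _ Af _ Ag].
- exact: alg_u.
- by rewrite def_v; apply: alg_add; [apply: alg_scale; apply: alg_u | apply: alg_v].
- exact: alg_add.
- exact: alg_scale.
- exact: alg_mul.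
Qed.

Hypothesis charK0 : [pchar K] =i pred0.

Lemma distinct_leads_letters u v a b : in_L2 u -> in_L2 v ->
  is_lead u a -> is_lead v b -> a != b ->
  in_gen_alg u v (ncx K) -> in_gen_alg u v (ncy K) -> size a = 1%N /\ size b = 1%N.
Proof.
move=> Lu Lv lead_a lead_b ne_ab Ax Ay.
have a0 := L2_lead_neq_nil Lu lead_a; have b0 := L2_lead_neq_nil Lv lead_b.
have inj_ab : injective (word_subst a b).
  apply: word_subst_inj => //; apply: lyndon_noncommuting => //.
    exact: (lead_lyndon charK0 Lu lead_a).
  exact: (lead_lyndon charK0 Lv lead_b).
have leads_letter c F : is_lead F [:: c] -> in_gen_alg u v F -> a = [:: c] \/ b = [:: c].
  move=> lead_F AF; have [l def_F] := alg_poly_eval AF; rewrite def_F in lead_F.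
  have [|m lead_m] := lead_poly_eval (l := l) lead_a lead_b inj_ab.
    by exists [:: c]; apply: lead_F.1.
  by apply: word_subst_letter a0 b0 _; apply: lead_uniq lead_m lead_F.
have [ax|bx] := leads_letter _ _ (lead_ncx K) Ax;
  have [ay|by_] := leads_letter _ _ (lead_ncy K) Ay.
- by rewrite ax in ay.
- by rewrite ax by_.
- by rewrite ay bx.
- by rewrite bx in by_.
Qed.

(* When the leading words of [u] and [v] coincide, [v] is replaced by
   [v - c u], whose coefficient at that word vanishes. *)
Lemma L2_generators_linear u v : in_L2 u -> in_L2 v ->
  in_gen_alg u v (ncx K) -> in_gen_alg u v (ncy K) ->
  forall w, (1 < size w)%N -> u w = 0 /\ v w = 0.
Proof.
move=> Lu Lv Ax Ay.
have det_uv := gen_alg_lin_det_neq0 Ax Ay (L2_nil Lu) (L2_nil Lv).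
have [a lead_a] := L2_lead_exists Lu (lin_det_nonzero det_uv).
suff linear_if_distinct v' : in_L2 v' -> in_gen_alg u v' (ncx K) -> in_gen_alg u v' (ncy K) ->
    v' a = 0 -> forall w, (1 < size w)%N -> u w = 0 /\ v' w = 0.
  pose c := v a / u a; pose v' := ncadd (ncscale (- c) u) v.
  have def_v : v = ncadd (ncscale c u) v'.
    by apply: functional_extensionality => w; rewrite /v' /ncadd /ncscale; ring.
  have Lv' : in_L2 v' by apply: L2_add => //; apply: L2_scale.
  have v'a0 : v' a = 0 by rewrite /v' /ncadd /ncscale /c mulNr divfK ?addNr ?lead_a.1.
  move=> w lt_w; have [uw v'w] := linear_if_distinct v' Lv'
    (gen_alg_shift def_v Ax) (gen_alg_shift def_v Ay) v'a0 w lt_w.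
  by rewrite def_v /ncadd /ncscale uw v'w mulr0 addr0.
move=> Lv' Ax' Ay' v'a0.
have [b lead_b] : exists b, is_lead v' b.
  apply: (L2_lead_exists Lv' (lin_det_nonzero (v := u) _)).
  by rewrite lin_detC oppr_eq0 (gen_alg_lin_det_neq0 Ax' Ay' (L2_nil Lu) (L2_nil Lv')).
have ne_ab : a != b by apply: contraNneq lead_b.1 => <-; rewrite v'a0.
have [sz_a sz_b] := distinct_leads_letters Lu Lv' lead_a lead_b ne_ab Ax' Ay'.
by move=> w lt_w; rewrite (lead_eq0_long lead_a) ?(lead_eq0_long lead_b) ?sz_a ?sz_b.
Qed.

End Linearity.

Section LieEndomorphisms.
Variable K : fieldType.
Implicit Types f g h : ncser K.

Definition nczero : ncser K := fun _ => 0.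

Lemma nczero_opp_add f : ncadd (ncscale (-1) f) f = nczero.
Proof. by apply: functional_extensionality => w; rewrite /ncadd /ncscale /nczero; ring. Qed.

Lemma L2_zero : in_L2 nczero.
Proof. by rewrite -(nczero_opp_add (ncx K)); apply: L2_add; [apply: L2_scale|]; apply: L2_x. Qed.

Variable xi : ncser K -> ncser K.
Hypothesis xi_endo : lie_endo xi.

Lemma lie_endo_zero : xi nczero = nczero.
Proof.
case: xi_endo => _ xi_lin _.
by rewrite -{1}(nczero_opp_add (ncx K)) xi_lin ?nczero_opp_add //; apply: L2_x.
Qed.

Lemma lie_endo_add f g : in_L2 f -> in_L2 g -> xi (ncadd f g) = ncadd (xi f) (xi g).
Proof.
have scale1 F : ncscale 1 F = F.
  by apply: functional_extensionality => w; rewrite /ncscale mul1r.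
by case: xi_endo => _ xi_lin _ Lf Lg; have := xi_lin 1 f g Lf Lg; rewrite !scale1.
Qed.

Lemma lie_endo_scale a f : in_L2 f -> xi (ncscale a f) = ncscale a (xi f).
Proof.
have add0 F : ncadd F nczero = F.
  by apply: functional_extensionality => w; rewrite /ncadd addr0.
case: xi_endo => _ xi_lin _ Lf.
by have := xi_lin a f nczero Lf L2_zero; rewrite lie_endo_zero !add0.
Qed.

Lemma lie_endo_gen_alg f : in_L2 f -> in_gen_alg (xi (ncx K)) (xi (ncy K)) (xi f).
Proof.
case: (xi_endo) => _ _ xi_lie.
elim=> {f} [||f g Lf IHf Lg IHg|a f Lf IHf|f g Lf IHf Lg IHg].
- exact: alg_u.
- exact: alg_v.
- by rewrite lie_endo_add //; apply: alg_add.
- by rewrite lie_endo_scale //; apply: alg_scale.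
- by rewrite xi_lie //; apply: gen_alg_lie.
Qed.

End LieEndomorphisms.

Section LinearAutomorphisms.
Variable K : fieldType.
Hypothesis charK0 : [pchar K] =i pred0.
Implicit Types f g h : ncser K.

Definition lin2 (a b : K) : ncser K := ncadd (ncscale a (ncx K)) (ncscale b (ncy K)).

Lemma ncser_linearE f : f [::] = 0 -> (forall w, (1 < size w)%N -> f w = 0) ->
  f = lin2 (f [:: false]) (f [:: true]).
Proof.
move=> f0 f_deg1; apply: functional_extensionality => w.
rewrite /lin2 /ncadd /ncscale /ncx /ncy.
case: w => [|c [|c' w]]; first by rewrite f0 /=; ring.
  by case: c => /=; ring.
by rewrite f_deg1 //; case: c; rewrite /= ?andbF /=; ring.
Qed.

Lemma lie_aut_linear xi xiinv : lie_aut_with_inv xi xiinv ->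
  exists a b c d, [/\ xi (ncx K) = lin2 a b, xi (ncy K) = lin2 c d & a * d - b * c != 0].
Proof.
move=> [xi_endo xiinvL _ xiK]; have [xiL _ _] := xi_endo.
have Lu := xiL _ (L2_x K); have Lv := xiL _ (L2_y K).
have gen f : in_L2 f -> in_gen_alg (xi (ncx K)) (xi (ncy K)) f.
  by move=> Lf; rewrite -(xiK _ Lf); apply/lie_endo_gen_alg/xiinvL.
have [Ax Ay] := (gen _ (L2_x K), gen _ (L2_y K)).
have deg1 := L2_generators_linear charK0 Lu Lv Ax Ay.
exists (xi (ncx K) [:: false]), (xi (ncx K) [:: true]).
exists (xi (ncy K) [:: false]), (xi (ncy K) [:: true]); split.
- by apply: ncser_linearE; [exact: L2_nil | by move=> w /deg1 []].
- by apply: ncser_linearE; [exact: L2_nil | by move=> w /deg1 []].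
- exact: gen_alg_lin_det_neq0 Ax Ay (L2_nil Lu) (L2_nil Lv).
Qed.

End LinearAutomorphisms.

(** * Symmetric elements *)

Section SymmetricElements.
Variable K : fieldType.
Implicit Types f g h : ncser K.

Lemma ncswap_mul f g : ncswap (ncmul f g) = ncmul (ncswap f) (ncswap g).
Proof.
apply: functional_extensionality => w; rewrite /ncswap /ncmul size_map.
by apply: eq_bigr => i _; rewrite map_take map_drop.
Qed.

Lemma ncswap_lie f g : ncswap (nclie f g) = nclie (ncswap f) (ncswap g).
Proof. by rewrite /nclie -!ncswap_mul. Qed.

Lemma ncswap_x : ncswap (ncx K) = ncy K.
Proof.
by apply: functional_extensionality => -[|[] [|? ?]] //; rewrite /ncswap /ncx /ncy.
Qed.

Lemma ncswap_y : ncswap (ncy K) = ncx K.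
Proof.
by apply: functional_extensionality => -[|[] [|? ?]] //; rewrite /ncswap /ncx /ncy.
Qed.

Lemma ncswap_lin2 (a b : K) : ncswap (lin2 a b) = lin2 b a.
Proof.
rewrite /lin2 -[ncswap _]/(ncadd (ncscale a (ncswap (ncx K))) (ncscale b (ncswap (ncy K)))).
rewrite ncswap_x ncswap_y; apply: functional_extensionality => w.
by rewrite /ncadd addrC.
Qed.

Lemma symmetric_lin2 (a : K) : symmetric_L2 (lin2 a a).
Proof.
split; last exact: ncswap_lin2.
by apply: L2_add; apply: L2_scale; [apply: L2_x | apply: L2_y].
Qed.

Definition sym_bracket f g := nclie (ncadd f (ncscale (-1) g)) (nclie f g).

Lemma L2_sym_bracket f g : in_L2 f -> in_L2 g -> in_L2 (sym_bracket f g).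
Proof. by move=> Lf Lg; apply: L2_lie; [apply: L2_add => //; apply: L2_scale | apply: L2_lie]. Qed.

Lemma nclie_scale a b f g :
  nclie (ncscale a f) (ncscale b g) = ncscale (a * b) (nclie f g).
Proof.
apply: functional_extensionality => w.
by rewrite /nclie !ncmul_scalel !ncmul_scaler /ncscale; ring.
Qed.

Lemma symmetric_sym_bracket_xy : symmetric_L2 (sym_bracket (ncx K) (ncy K)).
Proof.
split; first by apply: L2_sym_bracket; [apply: L2_x | apply: L2_y].
rewrite /sym_bracket !ncswap_lie.
rewrite -[ncswap (ncadd _ _)]/(ncadd (ncswap (ncx K)) (ncscale (-1) (ncswap (ncy K)))).
rewrite ncswap_x ncswap_y.
have -> : ncadd (ncy K) (ncscale (-1) (ncx K)) =
    ncscale (-1) (ncadd (ncx K) (ncscale (-1) (ncy K))).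
  by apply: functional_extensionality => w; rewrite /ncadd /ncscale; ring.
have -> : nclie (ncy K) (ncx K) = ncscale (-1) (nclie (ncx K) (ncy K)).
  by apply: functional_extensionality => w; rewrite /nclie /ncscale; ring.
rewrite nclie_scale; apply: functional_extensionality => w.
by rewrite /ncscale; ring.
Qed.

Lemma sym_bracket_lin2_xxy a b c d :
  sym_bracket (lin2 a b) (lin2 c d) [:: false; false; true] = (a * d - b * c) * (a - c).
Proof.
rewrite /sym_bracket /nclie /ncmul /lin2 /ncadd /ncscale /ncx /ncy.
by rewrite !big_ord_recr !big_ord0 /=; ring.
Qed.

Lemma sym_bracket_lin2_yyx a b c d :
  sym_bracket (lin2 a b) (lin2 c d) [:: true; true; false] = - ((a * d - b * c) * (b - d)).
Proof.
rewrite /sym_bracket /nclie /ncmul /lin2 /ncadd /ncscale /ncx /ncy.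
by rewrite !big_ord_recr !big_ord0 /=; ring.
Qed.

End SymmetricElements.

Section SymmetricAutomorphisms.
Variable K : fieldType.
Hypothesis charK0 : [pchar K] =i pred0.
Variable xi : ncser K -> ncser K.
Variables a b c d : K.
Hypothesis xi_endo : lie_endo xi.
Hypotheses (xi_x : xi (ncx K) = lin2 a b) (xi_y : xi (ncy K) = lin2 c d).

Lemma lie_endo_lin2 p q : xi (lin2 p q) = lin2 (p * a + q * c) (p * b + q * d).
Proof.
have [Lx Ly] := (L2_x K, L2_y K).
rewrite {1}/lin2 (lie_endo_add xi_endo) ?(lie_endo_scale xi_endo) ?xi_x ?xi_y //;
  try by apply: L2_scale.
by apply: functional_extensionality => w; rewrite /lin2 /ncadd /ncscale; ring.
Qed.

Lemma lie_endo_sym_bracket f g : in_L2 f -> in_L2 g ->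
  xi (sym_bracket f g) = sym_bracket (xi f) (xi g).
Proof.
have [_ _ xi_lie] := xi_endo; move=> Lf Lg.
have Lg' : in_L2 (ncscale (-1) g) by apply: L2_scale.
rewrite /sym_bracket xi_lie ?(xi_lie _ _ Lf Lg); try by [apply: L2_add | apply: L2_lie].
by rewrite (lie_endo_add xi_endo) // (lie_endo_scale xi_endo).
Qed.

Lemma sym_preserving_lin2 : a * d - b * c != 0 ->
  (forall f, symmetric_L2 f -> symmetric_L2 (xi f)) -> d = a /\ c = b.
Proof.
move=> det_neq0 xi_sym.
have two_neq0 : 2%:R != 0 :> K by move/pcharf0P: charK0 => ->.
have swap_eq f w : symmetric_L2 (xi f) -> xi f (map negb w) = xi f w.
  by case=> _ /(congr1 (fun g => g w)).
have sum_eq : a + c - (b + d) = 0.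
  have := swap_eq _ [:: false] (xi_sym _ (symmetric_lin2 1)).
  rewrite lie_endo_lin2 /lin2 /ncadd /ncscale /ncx /ncy /=.
  by move/eqP; rewrite eq_sym -subr_eq0 => /eqP <-; ring.
have diff_eq : a + b - (c + d) = 0.
  have := swap_eq _ [:: false; false; true] (xi_sym _ (symmetric_sym_bracket_xy K)).
  rewrite lie_endo_sym_bracket ?xi_x ?xi_y /= ?sym_bracket_lin2_xxy ?sym_bracket_lin2_yyx;
    try by [apply: L2_x | apply: L2_y].
  move/eqP; rewrite eq_sym -subr_eq0 => /eqP E.
  have : (a * d - b * c) * (a + b - (c + d)) = 0 by rewrite -E; ring.
  by move/eqP; rewrite mulf_eq0 (negbTE det_neq0) => /eqP.
have half (x : K) : 2%:R * x = 0 -> x = 0.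
  by move/eqP; rewrite mulf_eq0 (negbTE two_neq0) => /eqP.
split; apply/eqP; rewrite eq_sym -subr_eq0; apply/eqP/half.
  by rewrite -[RHS](addr0 0) -{1}sum_eq -diff_eq; ring.
by rewrite -[RHS](subr0 0) -{1}diff_eq -sum_eq; ring.
Qed.

End SymmetricAutomorphisms.

Lemma lin2_aut_inv (K : fieldType) (xi xiinv : ncser K -> ncser K) (a b : K) :
  lie_endo xi -> (forall f, in_L2 f -> xiinv (xi f) = f) ->
  xi (ncx K) = lin2 a b -> xi (ncy K) = lin2 b a ->
  let c := a ^+ 2 - b ^+ 2 in c != 0 ->
  xiinv (ncx K) = lin2 (c^-1 * a) (- (c^-1 * b)) /\
  xiinv (ncy K) = lin2 (- (c^-1 * b)) (c^-1 * a).
Proof.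
move=> xi_endo xiK xi_x xi_y c c_neq0.
have inv_lin2 p q F : xi (lin2 p q) = F -> xiinv F = lin2 p q.
  by move=> <-; apply: xiK; apply: L2_add; apply: L2_scale; [apply: L2_x | apply: L2_y].
have lin2_x : lin2 1 0 = ncx K.
  by apply: functional_extensionality => w; rewrite /lin2 /ncadd /ncscale /ncy; ring.
have lin2_y : lin2 0 1 = ncy K.
  by apply: functional_extensionality => w; rewrite /lin2 /ncadd /ncscale /ncx; ring.
split; apply: inv_lin2; rewrite (lie_endo_lin2 xi_endo xi_x xi_y) -?lin2_x -?lin2_y; congr lin2;
  by rewrite /c; field.
Qed.

Theorem theorem2p4 (K : fieldType) (charK0 : [pchar K] =i pred0)
  (xi xiinv : ncser K -> ncser K) :
  lie_aut_with_inv xi xiinv ->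
  (forall f, symmetric_L2 f -> symmetric_L2 (xi f)) ->
  exists a b : K,
    let c := a ^+ 2 - b ^+ 2 in
    [/\ c != 0,
        xi (ncx K) = ncadd (ncscale a (ncx K)) (ncscale b (ncy K)),
        xi (ncy K) = ncadd (ncscale b (ncx K)) (ncscale a (ncy K)),
        xiinv (ncx K) = ncadd (ncscale (c^-1 * a) (ncx K)) (ncscale (- (c^-1 * b)) (ncy K))
      & xiinv (ncy K) = ncadd (ncscale (- (c^-1 * b)) (ncx K)) (ncscale (c^-1 * a) (ncy K))].
Proof.
move=> aut xi_sym; have [xi_endo _ xiK _] := aut.
have [a [b [c [d [xi_x xi_y det_neq0]]]]] := lie_aut_linear charK0 aut.
have [eq_da eq_cb] := sym_preserving_lin2 charK0 xi_endo xi_x xi_y det_neq0 xi_sym.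
rewrite {}eq_da {}eq_cb -!expr2 in xi_y det_neq0.
have [xiinv_x xiinv_y] := lin2_aut_inv xi_endo xiK xi_x xi_y det_neq0.
by exists a, b.
Qed.
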